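(* Let $Q$ be a groupoid quantale with base locale $A$ and let $G=\mathcal G(Q)$ be its associated open groupoid. Then $Q$ is a principal quantale if and only if $G$ is an effective equivalence relation.
   Context: Let $A$ be a locale (frame), whose multiplication is $\wedge$. An $A$-$A$-bimodule is a sup-lattice $M$ with actions $(a,m)\mapsto a\triangleright m$ and $(m,a)\mapsto m\triangleleft a$, each preserving arbitrary joins in each variable, such that $1_A\triangleright m=m$, $(a\wedge b)\triangleright m=a\triangleright(b\triangleright m)$, $m\triangleleft 1_A=m$, $m\triangleleft(a\wedge b)=(m\triangleleft a)\triangleleft b$, $(a\triangleright m)\triangleleft b=a\triangleright(m\triangleleft b)$. An $A$-$A$-quantale is such a bimodule $Q$ with an associative multiplication preserving joins in each variable with $(a\triangleright x)y=a\triangleright(xy)$, $(x\triangleleft a)y=x(a\triangleright y)$, $(xy)\triangleleft a=x(y\triangleleft a)$; it is involutive if it has a join-preserving $x\mapsto x^*$ with $x^{**}=x$, $(xy)^*=y^*x^*$, $(a\triangleright(x\triangleleft b))^*=b\triangleright(x^*\triangleleft a)$. $1_Q$ is the top of $Q$. A support is a join-preserving $\varsigma:Q\to A$ with $\varsigma(1_Q)=1_A$, $\varsigma(x)\triangleright y\le xx^*y$, $\varsigma(x)\triangleright x=x$; equivariant if $\varsigma(a\triangleright x)=a\wedge\varsigma(x)$. A based quantal frame is an involutive $A$-$A$-quantale that is a frame with $(a\triangleright x)\wedge y=a\triangleright(x\wedge y)$ and $(x\triangleleft a)\wedge y=(x\wedge y)\triangleleft a$; an equivariantly supported quantal frame is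 one with an equivariant support. It is reflexive if it has a frame homomorphism $\upsilon:Q\to A$ with $\upsilon(a\triangleright1_Q)=a=\upsilon(1_Q\triangleleft a)$. $Q\otimes_AQ$ is the quotient of $Q\otimes Q$ by $x\otimes(a\triangleright y)=(x\triangleleft a)\otimes y$, $\mu_A:Q\otimes_AQ\to Q$ the induced multiplication; $Q$ is multiplicative if the right adjoint of $\mu_A$ preserves joins. Unit laws: $\bigvee_{xy\le a}\upsilon(x)\triangleright y=a$ for all $a$; inverse law: $\upsilon(a)\triangleright1_Q=\bigvee_{xy^*\le a}x\wedge y$ for all $a$. A groupoid quantale is a multiplicative equivariantly supported reflexive based quantal frame satisfying the unit laws and inverse law. Its open groupoid $\mathcal G(Q)$ has $\mathcal O(G_0)=A$, $\mathcal O(G_1)=Q$, $d^*(a)=a\triangleright1_Q$, $i^*(x)=x^*$, $r=d\circ i$, $u^*=\upsilon$, $\mathcal O(G_2)=Q\otimes_AQ$, $m^*(a)=\bigvee_{xy\le a}x\otimes y$. Let $R(Q)=\{x\in Q\mid x1_Q\le x\}$, $L(Q)=\{x^*\mid x\in R(Q)\}$, $T(Q)=R(Q)\cap L(Q)$. A principal quantale is an equivariantly supported quantal frame $Q$ such that $Q\cong R(Q)\otimes_{T(Q)}L(Q)$ in the category of frames (the pushout of the inclusions $T(Q)\to R(Q)$, $T(Q)\to L(Q)$). An open localic groupoid $G$ is an effective equivalence relation if $(G_1,d,r)$ is the kernel pair in the category of locales of the coequalizer $G_0\to G_0/G$ of $d$ and $r$, i.e. the square formed by $d,r$ and two copies of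 $G_0\to G_0/G$ is a pullback. *)

Set Implicit Arguments.
Unset Strict Implicit.

(* Frames (= locales, via their frames of opens).                      *)

Definition img {T U : Type} (f : T -> U) (S : T -> Prop) : U -> Prop :=
  fun y => exists x, S x /\ y = f x.

Record frame := Frame {
  fcar :> Type;
  fle : fcar -> fcar -> Prop;
  fsup : (fcar -> Prop) -> fcar;
  fmeet : fcar -> fcar -> fcar;
  fle_refl : forall x, fle x x;
  fle_trans : forall x y z, fle x y -> fle y z -> fle x z;
  fle_antisym : forall x y, fle x y -> fle y x -> x = y;
  fsup_ub : forall (S : fcar -> Prop) x, S x -> fle x (fsup S);
  fsup_least : forall (S : fcar -> Prop) y, (forall x, S x -> fle x y) -> fle (fsup S) y;
  fmeet_glb : forall x y z, fle z (fmeet x y) <-> (fle z x /\ fle z y);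
  fdistr : forall a (S : fcar -> Prop),
      fmeet a (fsup S) = fsup (img (fmeet a) S)
}.

Arguments fle {f}.
Arguments fsup {f}.
Arguments fmeet {f}.

Definition ftop {F : frame} : F := fsup (fun _ => True).

Definition frame_hom (F1 F2 : frame) (f : F1 -> F2) : Prop :=
  (forall S : F1 -> Prop, f (fsup S) = fsup (img f S)) /\
  (forall x y, f (fmeet x y) = fmeet (f x) (f y)) /\
  f ftop = ftop.

(* A frame homomorphism out of a subframe [P] of [F1] (P closed under
   joins, finite meets and top in F1), represented by its values on P. *)
Definition frame_hom_on (F1 : frame) (P : F1 -> Prop) (F2 : frame)
    (f : F1 -> F2) : Prop :=
  (forall S : F1 -> Prop, (forall x, S x -> P x) -> f (fsup S) = fsup (img f S)) /\
  (forall x y, P x -> P y -> f (fmeet x y) = fmeet (f x) (f y)) /\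
  f ftop = ftop.

Definition join_preserving (F1 F2 : frame) (f : F1 -> F2) : Prop :=
  forall S : F1 -> Prop, f (fsup S) = fsup (img f S).

Section GroupoidQuantale.

Variables (A Q : frame)
          (actL : A -> Q -> Q)      (* a |> x *)
          (actR : Q -> A -> Q)      (* x <| a *)
          (mul : Q -> Q -> Q)
          (inv : Q -> Q).

Definition is_bimodule : Prop :=
  (forall (S : A -> Prop) m, actL (fsup S) m = fsup (img (fun a => actL a m) S)) /\
  (forall a (S : Q -> Prop), actL a (fsup S) = fsup (img (actL a) S)) /\
  (forall (S : Q -> Prop) a, actR (fsup S) a = fsup (img (fun m => actR m a) S)) /\
  (forall m (S : A -> Prop), actR m (fsup S) = fsup (img (actR m) S)) /\
  (forall m, actL ftop m = m) /\
  (forall a b m, actL (fmeet a b) m = actL a (actL b m)) /\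
  (forall m, actR m ftop = m) /\
  (forall a b m, actR m (fmeet a b) = actR (actR m a) b) /\
  (forall a b m, actR (actL a m) b = actL a (actR m b)).

Definition is_AA_quantale : Prop :=
  is_bimodule /\
  (forall x y z, mul (mul x y) z = mul x (mul y z)) /\
  (forall (S : Q -> Prop) y, mul (fsup S) y = fsup (img (fun x => mul x y) S)) /\
  (forall x (S : Q -> Prop), mul x (fsup S) = fsup (img (mul x) S)) /\
  (forall a x y, mul (actL a x) y = actL a (mul x y)) /\
  (forall a x y, mul (actR x a) y = mul x (actL a y)) /\
  (forall a x y, actR (mul x y) a = mul x (actR y a)).

Definition is_involutive_AA_quantale : Prop :=
  is_AA_quantale /\
  join_preserving inv /\
  (forall x, inv (inv x) = x) /\
  (forall x y, inv (mul x y) = mul (inv y) (inv x)) /\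
  (forall a b x, inv (actL a (actR x b)) = actL b (actR (inv x) a)).

Definition is_based_quantal_frame : Prop :=
  is_involutive_AA_quantale /\
  (forall a x y, fmeet (actL a x) y = actL a (fmeet x y)) /\
  (forall a x y, fmeet (actR x a) y = actR (fmeet x y) a).

Definition is_support (s : Q -> A) : Prop :=
  join_preserving s /\
  s ftop = ftop /\
  (forall x y, fle (actL (s x) y) (mul (mul x (inv x)) y)) /\
  (forall x, actL (s x) x = x).

Definition is_equivariant_support (s : Q -> A) : Prop :=
  is_support s /\ (forall a x, s (actL a x) = fmeet a (s x)).

Definition is_eq_supported_quantal_frame : Prop :=
  is_based_quantal_frame /\ exists s : Q -> A, is_equivariant_support s.

Definition is_reflexivity (u : Q -> A) : Prop :=
  frame_hom u /\ (forall a, u (actL a ftop) = a) /\ (forall a, u (actR ftop a) = a).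

(* The tensor product Q (x)_A Q of sup-lattices, presented concretely:
   an element is a set D of pairs (x,y) (standing for the join of the
   x (x) y with (x,y) in D) which is down-closed and closed under joins in
   each variable separately (so x (x) y <= D iff D x y), and which respects
   the defining relations (x <| a) (x) y = x (x) (a |> y). *)
Definition is_tensorA (D : Q -> Q -> Prop) : Prop :=
  (forall x x' y, D x y -> fle x' x -> D x' y) /\
  (forall x y y', D x y -> fle y' y -> D x y') /\
  (forall (S : Q -> Prop) y, (forall x, S x -> D x y) -> D (fsup S) y) /\
  (forall x (S : Q -> Prop), (forall y, S y -> D x y) -> D x (fsup S)) /\
  (forall x a y, D (actR x a) y <-> D x (actL a y)).

Definition tensorA_sup (Fam : (Q -> Q -> Prop) -> Prop) : Q -> Q -> Prop :=
  fun x y => forall D, is_tensorA D ->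
    (forall D', Fam D' -> forall x' y', D' x' y' -> D x' y') -> D x y.

Definition mu_A (D : Q -> Q -> Prop) : Q :=
  fsup (fun z => exists x y, D x y /\ z = mul x y).

Definition mu_A_radj (z : Q) : Q -> Q -> Prop :=
  tensorA_sup (fun D => is_tensorA D /\ fle (mu_A D) z).

Definition is_multiplicative : Prop :=
  forall (Z : Q -> Prop) x y,
    mu_A_radj (fsup Z) x y <->
    tensorA_sup (fun D => exists z, Z z /\ D = mu_A_radj z) x y.

Definition unit_laws (u : Q -> A) : Prop :=
  forall a : Q,
    fsup (fun z => exists x y, fle (mul x y) a /\ z = actL (u x) y) = a.

Definition inverse_law (u : Q -> A) : Prop :=
  forall a : Q,
    actL (u a) ftop = fsup (fun z => exists x y, fle (mul x (inv y)) a /\ z = fmeet x y).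

Definition is_groupoid_quantale : Prop :=
  is_eq_supported_quantal_frame /\
  is_multiplicative /\
  exists u : Q -> A, is_reflexivity u /\ unit_laws u /\ inverse_law u.

Definition RQ (x : Q) : Prop := fle (mul x ftop) x.
Definition LQ (x : Q) : Prop := exists y, RQ y /\ x = inv y.
Definition TQ (x : Q) : Prop := RQ x /\ LQ x.

(* Q is the pushout in Frm of the subframe inclusions T(Q) -> R(Q),
   T(Q) -> L(Q), with cocone the inclusions R(Q) -> Q, L(Q) -> Q. *)
Definition is_pushout_RTL : Prop :=
  forall (F : frame) (f g : Q -> F),
    frame_hom_on RQ f -> frame_hom_on LQ g ->
    (forall t, TQ t -> f t = g t) ->
    exists h : Q -> F,
      (frame_hom h /\ (forall x, RQ x -> h x = f x) /\ (forall x, LQ x -> h x = g x)) /\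
      (forall h' : Q -> F,
         frame_hom h' -> (forall x, RQ x -> h' x = f x) -> (forall x, LQ x -> h' x = g x) ->
         forall x, h' x = h x).

Definition is_principal_quantale : Prop :=
  is_eq_supported_quantal_frame /\ is_pushout_RTL.

(* d_star(a) = a |> 1_Q ; r = d o i, so r_star = i_star o d_star. *)
Definition G_dstar (a : A) : Q := actL a ftop.
Definition G_rstar (a : A) : Q := inv (G_dstar a).

(* The coequalizer G_0 -> G_0/G of d, r in Loc is, on frames, the
   equalizer O(G_0/G) = {a in A | d_star a = r_star a} with its inclusion into A.
   G is an effective equivalence relation iff the square
       G_1 --r--> G_0
        |d         |
       G_0 ----> G_0/G
   is a pullback of locales, i.e. Q (with d_star, r_star) is the pushout in Frm
   of the two inclusions O(G_0/G) -> A. *)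
Definition G_quotient_opens (a : A) : Prop := G_dstar a = G_rstar a.

Definition is_effective_equivalence_relation : Prop :=
  forall (F : frame) (f g : A -> F),
    frame_hom f -> frame_hom g ->
    (forall e, G_quotient_opens e -> f e = g e) ->
    exists h : Q -> F,
      (frame_hom h /\ (forall a, h (G_dstar a) = f a) /\ (forall a, h (G_rstar a) = g a)) /\
      (forall h' : Q -> F,
         frame_hom h' -> (forall a, h' (G_dstar a) = f a) -> (forall a, h' (G_rstar a) = g a) ->
         forall x, h' x = h x).

End GroupoidQuantale.

(** The support turns every right-sided element [x] into [s x |> 1], so R(Q) is
    exactly the image of [d*] and L(Q) that of [r* = i* o d*]; the reflexivity
    [u] is a common retraction of [d*] and [r*].  Hence [d*] and [r*] are frame
    isomorphisms of [A] onto R(Q) and L(Q) which carry the equalizer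
    [{a | d* a = r* a}] onto T(Q), and the two pushout conditions correspond
    term by term. *)

From Stdlib Require Import Setoid.

Section FrameFacts.

Context {F : frame}.

Lemma fle_top (x : F) : fle x ftop.
Proof. apply fsup_ub; exact I. Qed.

Lemma fmeet_le_l (x y : F) : fle (fmeet x y) x.
Proof. exact (proj1 (proj1 (fmeet_glb x y _) (fle_refl _))). Qed.

Lemma fmeet_le_r (x y : F) : fle (fmeet x y) y.
Proof. exact (proj2 (proj1 (fmeet_glb x y _) (fle_refl _))). Qed.

Lemma fmeet_topl (x : F) : fmeet ftop x = x.
Proof.
  apply fle_antisym; [apply fmeet_le_r|].
  apply fmeet_glb; split; [apply fle_top | apply fle_refl].
Qed.

Lemma fsup_pair_le {x y : F} : fle x y -> fsup (fun z => z = x \/ z = y) = y.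
Proof.
  intros Hxy; apply fle_antisym.
  - apply fsup_least; intros z [-> | ->]; [exact Hxy | apply fle_refl].
  - apply fsup_ub; right; reflexivity.
Qed.

End FrameFacts.

Lemma fsup_img_comp {X Y Z : frame} (g : X -> Y) (f : Y -> Z) (S : X -> Prop) :
  fsup (img f (img g S)) = fsup (img (fun a => f (g a)) S).
Proof.
  apply fle_antisym; apply fsup_least.
  - intros z [w [[a [Ha ->]] ->]]; apply fsup_ub; exists a; auto.
  - intros z [a [Ha ->]]; apply fsup_ub; exists (g a); split; auto; exists a; auto.
Qed.

Lemma join_preserving_mono {F1 F2 : frame} {f : F1 -> F2} :
  join_preserving f -> forall x y, fle x y -> fle (f x) (f y).
Proof.
  intros Hf x y Hxy; rewrite <- (fsup_pair_le Hxy), Hf.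
  apply fsup_ub; exists x; auto.
Qed.

Lemma frame_hom_comp {F1 F2 F3 : frame} {f : F1 -> F2} {g : F2 -> F3} :
  frame_hom f -> frame_hom g -> frame_hom (fun x => g (f x)).
Proof.
  intros [f_sup [f_meet f_top]] [g_sup [g_meet g_top]]; split; [|split].
  - intros S; rewrite f_sup, g_sup; apply fsup_img_comp.
  - intros x y; rewrite f_meet, g_meet; reflexivity.
  - rewrite f_top, g_top; reflexivity.
Qed.

Lemma frame_hom_on_of_frame_hom {F1 F2 : frame} {P : F1 -> Prop} {f : F1 -> F2} :
  frame_hom f -> frame_hom_on P f.
Proof. intros [f_sup [f_meet f_top]]; split; [|split]; auto. Qed.

Lemma frame_hom_on_comp {F0 F1 F2 : frame} {P : F1 -> Prop} {d : F0 -> F1} {f : F1 -> F2} :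
  frame_hom d -> (forall a, P (d a)) -> frame_hom_on P f -> frame_hom (fun a => f (d a)).
Proof.
  intros [d_sup [d_meet d_top]] Pd [f_sup [f_meet f_top]]; split; [|split].
  - intros S; rewrite d_sup, f_sup; [apply fsup_img_comp|].
    intros x [a [_ ->]]; apply Pd.
  - intros a b; rewrite d_meet; apply f_meet; apply Pd.
  - rewrite d_top; exact f_top.
Qed.

(* An order-involution is an order automorphism, so it also preserves meets and top. *)
Lemma involution_frame_hom {F : frame} {f : F -> F} :
  join_preserving f -> (forall x, f (f x) = x) -> frame_hom f.
Proof.
  intros f_sup ff.
  assert (f_mono := join_preserving_mono f_sup).
  assert (f_adj : forall x y, fle x (f y) -> fle (f x) y).
  { intros x y Hxy; rewrite <- (ff y); apply f_mono, Hxy. }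
  split; [exact f_sup | split].
  - intros x y; apply fle_antisym.
    + apply fmeet_glb; split; apply f_mono; [apply fmeet_le_l | apply fmeet_le_r].
    + rewrite <- (ff (fmeet (f x) (f y))); apply f_mono.
      apply fmeet_glb; split; apply f_adj; [apply fmeet_le_l | apply fmeet_le_r].
  - apply fle_antisym; [apply fle_top|].
    rewrite <- (ff ftop) at 1; apply f_mono, fle_top.
Qed.

Section ImagePushout.

Variables (A Q : frame) (d r : A -> Q) (u : Q -> A) (R L : Q -> Prop).

Hypotheses (d_hom : frame_hom d) (r_hom : frame_hom r) (u_hom : frame_hom u)
  (u_d : forall a, u (d a) = a) (u_r : forall a, u (r a) = a)
  (R_image : forall x, R x <-> exists a, x = d a)
  (L_image : forall x, L x <-> exists a, x = r a).

Definition image_pushout : Prop :=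
  forall (F : frame) (f g : Q -> F),
    frame_hom_on R f -> frame_hom_on L g -> (forall t, R t /\ L t -> f t = g t) ->
    exists h : Q -> F,
      (frame_hom h /\ (forall x, R x -> h x = f x) /\ (forall x, L x -> h x = g x)) /\
      (forall h' : Q -> F,
         frame_hom h' -> (forall x, R x -> h' x = f x) -> (forall x, L x -> h' x = g x) ->
         forall x, h' x = h x).

Definition equalizer_pushout : Prop :=
  forall (F : frame) (f g : A -> F),
    frame_hom f -> frame_hom g -> (forall e, d e = r e -> f e = g e) ->
    exists h : Q -> F,
      (frame_hom h /\ (forall a, h (d a) = f a) /\ (forall a, h (r a) = g a)) /\
      (forall h' : Q -> F,
         frame_hom h' -> (forall a, h' (d a) = f a) -> (forall a, h' (r a) = g a) ->
         forall x, h' x = h x).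

Lemma R_d (a : A) : R (d a).
Proof. apply R_image; exists a; reflexivity. Qed.

Lemma L_r (a : A) : L (r a).
Proof. apply L_image; exists a; reflexivity. Qed.

(* Applying [u] to [t = d a = r b] gives [a = b]. *)
Lemma RL_equalizer {t : Q} : R t -> L t -> exists e, t = d e /\ d e = r e.
Proof.
  intros [a ->]%R_image [b Hab]%L_image.
  assert (a = b) as <- by (rewrite <- (u_d a), <- (u_r b); congruence).
  exists a; auto.
Qed.

Lemma image_pushout_equalizer_pushout : image_pushout -> equalizer_pushout.
Proof.
  intros HP F f g f_hom g_hom fg.
  destruct (HP F (fun x => f (u x)) (fun x => g (u x)))
    as [h [[h_hom [h_R h_L]] h_uniq]].
  - apply frame_hom_on_of_frame_hom, frame_hom_comp; assumption.
  - apply frame_hom_on_of_frame_hom, frame_hom_comp; assumption.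
  - intros t [Rt Lt]; destruct (RL_equalizer Rt Lt) as [e [-> de]].
    rewrite u_d; apply fg, de.
  - exists h; split; [split; [exact h_hom | split]|].
    + intros a; rewrite h_R, u_d by apply R_d; reflexivity.
    + intros a; rewrite h_L, u_r by apply L_r; reflexivity.
    + intros h' h'_hom h'_d h'_r; apply h_uniq; auto.
      * intros x [a ->]%R_image; rewrite h'_d, u_d; reflexivity.
      * intros x [a ->]%L_image; rewrite h'_r, u_r; reflexivity.
Qed.

Lemma equalizer_pushout_image_pushout : equalizer_pushout -> image_pushout.
Proof.
  intros HE F f g f_hom g_hom fg.
  destruct (HE F (fun a => f (d a)) (fun a => g (r a)))
    as [h [[h_hom [h_d h_r]] h_uniq]].
  - exact (frame_hom_on_comp d_hom R_d f_hom).
  - exact (frame_hom_on_comp r_hom L_r g_hom).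
  - intros e de; rewrite <- de; apply fg; split; [apply R_d | rewrite de; apply L_r].
  - exists h; split; [split; [exact h_hom | split]|].
    + intros x [a ->]%R_image; apply h_d.
    + intros x [a ->]%L_image; apply h_r.
    + intros h' h'_hom h'_R h'_L; apply h_uniq; auto.
      * intros a; apply h'_R, R_d.
      * intros a; apply h'_L, L_r.
Qed.

Lemma image_pushout_iff_equalizer_pushout : image_pushout <-> equalizer_pushout.
Proof.
  split; [apply image_pushout_equalizer_pushout | apply equalizer_pushout_image_pushout].
Qed.

End ImagePushout.

Section QuantaleOpens.

Context {A Q : frame} {actL : A -> Q -> Q} {actR : Q -> A -> Q}
  {mul : Q -> Q -> Q} {inv : Q -> Q}.

(* [x = s x |> x <= s x |> 1 <= x x* 1 <= x 1 <= x] for right-sided [x]. *)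
Lemma RQ_iff_dstar_image {s : Q -> A} :
  is_AA_quantale actL actR mul -> is_support actL mul inv s ->
  forall x, RQ mul x <-> exists a, x = G_dstar actL a.
Proof.
  intros [[_ [actL_sup _]] [mul_assoc [_ [mul_sup [mul_actL _]]]]] [_ [_ [s_le s_act]]] x.
  assert (actL_mono := fun a => join_preserving_mono (actL_sup a)).
  assert (mul_mono := fun y => join_preserving_mono (mul_sup y)).
  unfold RQ, G_dstar; split.
  - intros Rx; exists (s x); apply fle_antisym.
    + rewrite <- (s_act x) at 1; apply actL_mono, fle_top.
    + eapply fle_trans; [apply s_le|]; rewrite mul_assoc.
      eapply fle_trans; [apply mul_mono, fle_top | exact Rx].
  - intros [a ->]; rewrite mul_actL; apply actL_mono, fle_top.
Qed.

Lemma LQ_iff_rstar_image {s : Q -> A} :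
  is_AA_quantale actL actR mul -> is_support actL mul inv s ->
  forall x, LQ mul inv x <-> exists a, x = G_rstar actL inv a.
Proof.
  intros HQ Hs x; split.
  - intros [y [[a ->]%(RQ_iff_dstar_image HQ Hs) ->]]; exists a; reflexivity.
  - intros [a ->]; exists (G_dstar actL a); split; [|reflexivity].
    apply (RQ_iff_dstar_image HQ Hs); exists a; reflexivity.
Qed.

Lemma inv_frame_hom : is_involutive_AA_quantale actL actR mul inv -> frame_hom inv.
Proof. intros [_ [inv_sup [inv_inv _]]]; exact (involution_frame_hom inv_sup inv_inv). Qed.

Lemma G_rstarE :
  is_involutive_AA_quantale actL actR mul inv -> forall a, G_rstar actL inv a = actR ftop a.
Proof.
  intros HQ a.
  assert (inv_top : inv ftop = ftop) by apply (inv_frame_hom HQ).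
  destruct HQ as [[[_ [_ [_ [_ [actL_top [_ [actR_top _]]]]]]] _] [_ [_ [_ inv_act]]]].
  unfold G_rstar, G_dstar.
  rewrite <- (actR_top ftop) at 1; rewrite inv_act, inv_top, actL_top; reflexivity.
Qed.

Lemma G_dstar_frame_hom :
  is_based_quantal_frame actL actR mul inv -> frame_hom (G_dstar actL).
Proof.
  intros [[[[actL_sup [_ [_ [_ [actL_top [actL_meet _]]]]]] _] _] [meet_actL _]].
  unfold G_dstar; split; [|split].
  - intros S; apply actL_sup.
  - intros a b; rewrite meet_actL, fmeet_topl, actL_meet; reflexivity.
  - apply actL_top.
Qed.

Lemma G_rstar_frame_hom :
  is_based_quantal_frame actL actR mul inv -> frame_hom (G_rstar actL inv).
Proof.
  intros HQ; exact (frame_hom_comp (G_dstar_frame_hom HQ) (inv_frame_hom (proj1 HQ))).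
Qed.

Lemma principal_iff_effective {s u : Q -> A} :
  is_based_quantal_frame actL actR mul inv -> is_support actL mul inv s ->
  is_reflexivity actL actR u ->
  (is_pushout_RTL mul inv <-> is_effective_equivalence_relation actL inv).
Proof.
  intros HQ Hs [u_hom [u_d u_actR]].
  assert (HAA : is_AA_quantale actL actR mul) by apply HQ.
  apply image_pushout_iff_equalizer_pushout with (u := u).
  - exact (G_dstar_frame_hom HQ).
  - exact (G_rstar_frame_hom HQ).
  - exact u_hom.
  - exact u_d.
  - intros a; rewrite (G_rstarE (proj1 HQ)); apply u_actR.
  - exact (RQ_iff_dstar_image HAA Hs).
  - exact (LQ_iff_rstar_image HAA Hs).
Qed.

End QuantaleOpens.

Theorem theorem5p16 (A Q : frame) (actL : A -> Q -> Q) (actR : Q -> A -> Q)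
    (mul : Q -> Q -> Q) (inv : Q -> Q) :
  is_groupoid_quantale actL actR mul inv ->
  (is_principal_quantale actL actR mul inv <->
   is_effective_equivalence_relation actL inv).
Proof.
  intros [HES [_ [u [Hu _]]]].
  pose proof HES as [HQ [s [Hs _]]].
  rewrite <- (principal_iff_effective HQ Hs Hu).
  split; [intros [_ HP] | intros HP; split]; assumption.
Qed.
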